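(* Let $\mathbf i$ and $\mathbf i'$ be reduced expressions of $w_0$ related by a braid move at positions $k,k+1,k+2$ (i.e. $i_k=i_{k+2}=p$, $i_{k+1}=q$, $i'_k=i'_{k+2}=q$, $i'_{k+1}=p$, $i'_j=i_j$ otherwise, with $p\cdot q=-1$), and assume the standard seed $\mathcal S^{\mathbf i}$ satisfies properties (A), (B), (C). Define $P'_j:=P_{\mathbf s(j)}$ for $j\ne k$, where $\mathbf s$ is the transposition of $k+1$ and $k+2$, and $P'_k:=\tilde P_k/(\beta_{k+1}P_k)$ with $\tilde P_k:=\beta_kP_{\mathrm{in}(k)}$. Then for every $1\le j\le N$, $$P'_jP'_{j_-(\mathbf i')}=\beta'_j\prod_{\substack{l<j<l_+(\mathbf i')\\ i'_l\cdot i'_j=-1}}P'_l,$$ with $P'_0:=1$.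
   Context: $\mathfrak g$ is a complex simple Lie algebra of simply-laced type, vertex set $I=\{1,\dots,n\}$, Cartan entries $i\cdot j$, Weyl group with simple reflections $s_i$, longest element $w_0$, $N=\ell(w_0)$, fundamental weights $\omega_i$. $\overline D:\mathbb C[\mathsf N]\to\mathbb C(\alpha_1,\dots,\alpha_n)$ is the algebra morphism $\overline D(f)=\sum_{\mathbf j}(f,e_{j_1}\cdots e_{j_r})\big(\alpha_{j_1}(\alpha_{j_1}+\alpha_{j_2})\cdots(\alpha_{j_1}+\dots+\alpha_{j_r})\big)^{-1}$ ($\mathbb C[\mathsf N]$ identified with the graded dual of $U(\mathfrak n)$, $e_i$ Chevalley generators, $\alpha_i$ indeterminates). Positive roots are linear forms in the $\alpha_i$; $(\beta;P)$ = multiplicity of $\beta$ in $P$. For a reduced expression $\mathbf i$: $\beta_j=s_{i_1}\cdots s_{i_{j-1}}(\alpha_{i_j})$ (and $\beta'_j$ likewise for $\mathbf i'$); $j_-(\mathbf i)=\max(\{l<j:i_l=i_j\}\cup\{0\})$; $j_+(\mathbf i)=\min(\{l>j:i_l=i_j\}\cup\{N+1\})$; $J_{ex}(\mathbf i)=\{j:j_+\le N\}$; flag minors $x_j=D(s_{i_1}\cdots s_{i_j}\omega_{i_j},\omega_{i_j})$. The quiver $Q^{\mathbf i}$ on $\{1,\dots,N\}$ has an ordinary arrow $u\to v$ iff $i_u\cdot i_v=-1$ and $u<v<u_+<v_+$, and a horizontal arrow $u_+\to u$ for $u\in J_{ex}$; $P_{\mathrm{in}(j)}:=P_{j_+}\prod_{l\in\mathrm{inord}(j)}P_l$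 with $\mathrm{inord}(j)$ the sources of ordinary arrows into $j$. Properties: (A) $\overline D(x_j)=1/P_j$ with $P_j$ a product of positive roots; (B) $P_jP_{j_-}=\beta_j\prod_{l<j<l_+,\,i_l\cdot i_j=-1}P_l$ for all $j$, $P_0=1$; (C) $(\beta_i;P_j)-(\beta_i;P_{j_+})\le1$ for $j\in J_{ex}$, $1\le i\le N$. *)

From HB Require Import structures.
From mathcomp Require Import all_boot all_order all_algebra all_field.
From mathcomp Require Import mpoly.
Set Implicit Arguments. Unset Strict Implicit. Unset Printing Implicit Defensive.
Import Order.TTheory GRing.Theory Num.Theory.
Local Open Scope ring_scope.

Section Defs.
Variable n : nat.

(* Cartan matrix of a complex simple Lie algebra of simply-laced (ADE) type,
   on the vertex set 'I_n : entries C i j = i . j ; diagonal 2, off-diagonal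
   0 or -1, symmetric, positive definite (finite type), connected (simple). *)
Definition simply_laced_simple_cartan (C : 'M[int]_n) : Prop :=
  [/\ (forall i, C i i = 2),
      (forall i j, i != j -> C i j = 0 \/ C i j = -1),
      (forall i j, C i j = C j i),
      (forall x : 'rV[rat]_n, x != 0 -> 0 < (x *m map_mx intr C *m x^T) 0 0) &
      (forall S : {set 'I_n}, S != set0 -> S != setT ->
         exists i j, [/\ i \in S, j \notin S & C i j = -1])].

(* Elements of the root lattice, as integer coordinate vectors in the basis
   of simple roots alpha_1..alpha_n. *)
Definition sroot (i : 'I_n) : 'rV[int]_n := delta_mx 0 i.

Definition sref (C : 'M[int]_n) (i : 'I_n) (v : 'rV[int]_n) : 'rV[int]_n :=
  v - (\sum_m C i m * v 0 m) *: sroot i.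

Definition wact (C : 'M[int]_n) (w : seq 'I_n) (v : 'rV[int]_n) : 'rV[int]_n :=
  foldr (sref C) v w.

Definition weq (C : 'M[int]_n) (w1 w2 : seq 'I_n) : Prop :=
  forall v, wact C w1 v = wact C w2 v.

Definition reduced (C : 'M[int]_n) (w : seq 'I_n) : Prop :=
  forall w', weq C w' w -> (size w <= size w')%N.

Definition red_w0 (C : 'M[int]_n) (w : seq 'I_n) : Prop :=
  reduced C w /\ forall w', reduced C w' -> (size w' <= size w)%N.

Definition pos_root (C : 'M[int]_n) (v : 'rV[int]_n) : Prop :=
  (exists (w : seq 'I_n) (i : 'I_n), v = wact C w (sroot i)) /\
  (forall m, 0 <= v 0 m).

(* a word of length N is a function on 1..N *)
Definition word (i : nat -> 'I_n) (N : nat) : seq 'I_n :=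
  [seq i l | l <- iota 1 N].

Definition beta (C : 'M[int]_n) (i : nat -> 'I_n) (j : nat) : 'rV[int]_n :=
  wact C (word i j.-1) (sroot (i j)).

(* j_-(i) = max ({l < j : i_l = i_j} u {0}) *)
Definition jminus (i : nat -> 'I_n) (j : nat) : nat :=
  (\max_(1 <= l < j | i l == i j) l)%N.

(* j_+(i) = min ({l > j : i_l = i_j, l <= N} u {N+1}) *)
Definition jplus (i : nat -> 'I_n) (N j : nat) : nat :=
  head N.+1 [seq l <- iota j.+1 (N - j) | i l == i j].

Definition braid (i : nat -> 'I_n) (k : nat) (p q : 'I_n) (j : nat) : 'I_n :=
  if (j == k) || (j == k.+2) then q else if j == k.+1 then p else i j.

Definition ratfun := {fraction {mpoly algC[n]}}.

(* a root, viewed as a linear form in the alpha_i *)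
Definition lin (v : 'rV[int]_n) : ratfun :=
  tofrac (\sum_m (v 0 m)%:~R *: 'X_m : {mpoly algC[n]}).

Definition prodR (s : seq 'rV[int]_n) : ratfun := \prod_(b <- s) lin b.

Definition PP (P : nat -> seq 'rV[int]_n) (j : nat) : ratfun :=
  if j == 0%N then 1 else prodR (P j).

(* P_in(k) = P_{k_+} * prod of P_u over the sources u of ordinary arrows
   u -> k of Q^i (i_u . i_k = -1 and u < k < u_+ < k_+) *)
Definition Pin (C : 'M[int]_n) (i : nat -> 'I_n) (N : nat)
  (P : nat -> seq 'rV[int]_n) (k : nat) : ratfun :=
  PP P (jplus i N k) *
  \prod_(1 <= u < k | (C (i u) (i k) == -1) &&
                      ((k < jplus i N u)%N && (jplus i N u < jplus i N k)%N))
     PP P u.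

Definition sk (k j : nat) : nat :=
  if j == k.+1 then k.+2 else if j == k.+2 then k.+1 else j.

Definition Pnew (C : 'M[int]_n) (i : nat -> 'I_n) (N : nat)
  (P : nat -> seq 'rV[int]_n) (k j : nat) : ratfun :=
  if j == 0%N then 1
  else if j == k then
    (lin (beta C i k) * Pin C i N P k) / (lin (beta C i k.+1) * PP P k)
  else PP P (sk k j).

End Defs.

From HB Require Import structures.
From mathcomp Require Import all_boot all_order all_algebra all_field.
From mathcomp Require Import mpoly.
From mathcomp Require Import zify ring.
Import Order.TTheory GRing.Theory Num.Theory.
Set Implicit Arguments. Unset Strict Implicit. Unset Printing Implicit Defensive.

(* Write i' for the braided word.  For l < k the next occurrence of the
   colour of l is the same in i and i', except that occurrences at k and k+1
   are exchanged; for m >= k+2 the prefixes of length m of i and i' give the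
   same Weyl group element since s_p s_q s_p = s_q s_p s_q.  Hence, for j
   outside {k, k+1, k+2}, relation (B) for i' at j is relation (B) for i at j
   reindexed by the transposition (k+1 k+2).  For j in {k, k+1, k+2}, let R_c
   be the product of the P_l with l < k, l_+ > k+2 and i_l . c = -1, and put
   a = (k+1)_-, b = k_-.  Relation (B) for i at k, k+1, k+2 reads
     P_k P_b = beta_k P_a R_p,  P_(k+1) P_a = beta_(k+1) R_q P_k,
     P_(k+2) P_k = beta_(k+2) R_p P_(k+1),
   and since beta'_k = beta_(k+2), beta'_(k+1) = beta_(k+1) and
   beta'_(k+2) = beta_k, the three new relations follow from these by field
   arithmetic.  Property (A) only serves to make the P_j nonzero. *)

Definition next_occ (P : pred nat) (N l : nat) : nat :=
  head N.+1 [seq x <- iota l.+1 (N - l) | P x].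

Definition prev_occ (P : pred nat) (j : nat) : nat := \max_(1 <= l < j | P l) l.

Section Occurrences.
Variables (P Q : pred nat) (N : nat).

Lemma next_occS l : l < N ->
  next_occ P N l = if P l.+1 then l.+1 else next_occ P N l.+1.
Proof. by move=> lN; rewrite /next_occ -subnSK //=; case: (P l.+1). Qed.

Lemma next_occ_gt l : l <= N -> l < next_occ P N l.
Proof.
move=> lN; rewrite /next_occ.
case E: [seq x <- _ | _] => [|y s] /=; first by rewrite ltnS.
have : y \in [seq x <- iota l.+1 (N - l) | P x] by rewrite E mem_head.
by rewrite mem_filter mem_iota => /and3P[].
Qed.

Lemma eq_next_occ l : (forall x, l < x -> P x = Q x) ->
  next_occ P N l = next_occ Q N l.
Proof.
move=> PQ; rewrite /next_occ; congr head; apply: eq_in_filter => x.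
by rewrite mem_iota => /andP[/PQ].
Qed.

Lemma next_occ_eq l m : l < m <= N ->
  (next_occ P N l == m) = P m && ~~ has P (iota l.+1 (m - l.+1)).
Proof.
move=> /andP[lm mN]; move: {2}(m - l.+1) (erefl (m - l.+1)) => d.
elim: d l lm => [|d IH] l lm ed.
  move: mN; have -> : m = l.+1 by apply/eqP; rewrite eqn_leq lm -subn_eq0 ed.
  move=> lN; rewrite subnn /= andbT next_occS //; case: (P l.+1); first by rewrite eqxx.
  by apply/negbTE; rewrite neq_ltn next_occ_gt ?orbT.
have l1m : l.+1 < m by rewrite -subn_gt0 ed.
have lN : l < N by apply: leq_trans mN; apply: ltnW.
rewrite next_occS // ed /=.
case: (P l.+1) => /=; last by rewrite IH // subnS ed.
by rewrite andbF; apply/negbTE; rewrite neq_ltn l1m.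
Qed.

Lemma prev_occ_lt j : 0 < j -> prev_occ P j < j.
Proof.
move=> j0; rewrite /prev_occ big_nat_cond.
apply: (big_ind (fun x => x < j)) => //; first by move=> x y xj yj; rewrite gtn_max xj.
by move=> l /andP[/andP[_ ->]].
Qed.

Lemma prev_occS j : 0 < j -> prev_occ P j.+1 = if P j then j else prev_occ P j.
Proof.
move=> j0; rewrite /prev_occ big_mkcond big_nat_recr //= -big_mkcond.
by case: (P j); rewrite ?maxn0 //; apply/maxn_idPr/ltnW/prev_occ_lt.
Qed.

Lemma eq_prev_occ j : (forall x, x < j -> P x = Q x) -> prev_occ P j = prev_occ Q j.
Proof.
move=> PQ; rewrite /prev_occ big_nat_cond [RHS]big_nat_cond.
by apply: eq_bigl => x; case/boolP: (1 <= x < j) => //= /andP[_ /PQ->].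
Qed.

Lemma prev_occ_eq l m : 0 < l < m ->
  (prev_occ P m == l) = P l && ~~ has P (iota l.+1 (m - l.+1)).
Proof.
move=> /andP[l0]; elim: m => // m IH; rewrite ltnS leq_eqVlt => /orP[/eqP<-|lm].
  rewrite prev_occS // subnn /= andbT; case: (P l); first by rewrite eqxx.
  by apply/negbTE; rewrite neq_ltn prev_occ_lt.
rewrite prev_occS; last exact: leq_trans l0 (ltnW lm).
rewrite subSS -(subnSK lm) -[(m - l.+1).+1]addn1 iotaD has_cat subnKC //= orbF.
case: (P m) => /=; last by rewrite orbF IH.
by rewrite orbT andbF; apply/negbTE; rewrite neq_ltn lm orbT.
Qed.

End Occurrences.

Section NextPrevious.
Variables (n : nat) (i : nat -> 'I_n) (N : nat).

Lemma jplusE l : jplus i N l = next_occ (fun x => i x == i l) N l.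
Proof. by []. Qed.

Lemma jminusE j : jminus i j = prev_occ (fun l => i l == i j) j.
Proof. by []. Qed.

Lemma jminus_lt j : 0 < j -> jminus i j < j.
Proof. exact: prev_occ_lt. Qed.

Lemma jminus_eq_jplus l j : 0 < l < j -> j <= N ->
  (jminus i j == l) = (jplus i N l == j).
Proof.
move=> /andP[l0 lj] jN; rewrite jminusE jplusE prev_occ_eq ?l0 // next_occ_eq ?lj //.
by rewrite eq_sym; case: eqP => //= ->.
Qed.

Lemma jminus_colour j : 0 < jminus i j -> i (jminus i j) = i j.
Proof.
case: j => [|j] m0; first by rewrite /jminus big_geq in m0.
have := prev_occ_eq (fun l => i l == i j.+1) (m := j.+1) (l := jminus i j.+1).
by rewrite m0 jminus_lt // eqxx => /(_ isT) /esym /andP[/eqP].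
Qed.

End NextPrevious.

Section Triple.
Variables (n : nat) (i : nat -> 'I_n) (N k : nat).
Hypotheses (k0 : 0 < k) (kN : k.+2 <= N) (i02 : i k.+2 = i k) (i01 : i k.+1 != i k).

Lemma jplus_triple_k : jplus i N k = k.+2.
Proof.
rewrite jplusE next_occS /=; last by lia.
by rewrite (negbTE i01) next_occS //= i02 eqxx.
Qed.

Lemma jminus_triple_k2 : jminus i k.+2 = k.
Proof.
by rewrite jminusE i02 prev_occS //= (negbTE i01) prev_occS //= eqxx.
Qed.

Lemma jminus_triple_k1_lt : jminus i k.+1 < k.
Proof. by rewrite jminusE prev_occS // eq_sym (negbTE i01) prev_occ_lt. Qed.

Lemma jminus_triple_neq_k j : 0 < j <= N -> j != k.+2 -> jminus i j != k.
Proof.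
case/andP=> j0 jN jk2; have [kj|jk] := ltnP k j.
  by rewrite (@jminus_eq_jplus _ i N) ?k0 // jplus_triple_k eq_sym.
by rewrite neq_ltn (leq_trans (jminus_lt i j0) jk).
Qed.

Lemma jplus_triple_neq_k2 l : 0 < l < k -> jplus i N l != k.+2.
Proof.
move=> /andP[l0 lk]; rewrite -jminus_eq_jplus ?l0 ?jminus_triple_k2 //; lia.
Qed.

Lemma ltn_jplus_triple l : 0 < l < k ->
  (k < jplus i N l) = (l == jminus i k.+1) || (k.+2 < jplus i N l).
Proof.
move=> lk; have := jplus_triple_neq_k2 lk.
by rewrite [l == _]eq_sym (@jminus_eq_jplus _ i N); lia.
Qed.

End Triple.

Lemma sk_id m x : x != m.+1 -> x != m.+2 -> sk m x = x.
Proof. by rewrite /sk => /negbTE-> /negbTE->. Qed.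

Lemma sk1 m : sk m m.+1 = m.+2.
Proof. by rewrite /sk eqxx. Qed.

Lemma sk2 m : sk m m.+2 = m.+1.
Proof. by rewrite /sk ifN ?eqxx //; lia. Qed.

Lemma sk_inv m : involutive (sk m).
Proof.
move=> x; have [->|x1] := eqVneq x m.+1; first by rewrite sk1 sk2.
have [->|x2] := eqVneq x m.+2; first by rewrite sk2 sk1.
by rewrite !sk_id.
Qed.

Lemma ltn_sk m t x : t != m.+1 -> (t < sk m x) = (t < x).
Proof.
move=> tm; rewrite /sk; case: eqP => [->|_]; first by lia.
by case: eqP => [->|_] //; lia.
Qed.

Section BigNat.
Variables (R : Type) (idx : R) (op : Monoid.com_law idx).

Lemma big_nat_sk m j (P : pred nat) (F : nat -> R) : j != m.+2 ->
  \big[op/idx]_(1 <= l < j | P l) F l =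
  \big[op/idx]_(1 <= l < j | P (sk m l)) F (sk m l).
Proof.
move=> jm; rewrite -(big_map (sk m) P F); apply: perm_big; apply: uniq_perm.
- exact: iota_uniq.
- by rewrite (map_inj_uniq (can_inj (sk_inv m))) iota_uniq.
move=> x; rewrite -{2}(sk_inv m x) (mem_map (can_inj (sk_inv m))) !mem_index_iota.
by rewrite /sk; case: eqP => [->|_]; [|case: eqP => [->|_]]; lia.
Qed.

Lemma big_nat_extract (P Q : pred nat) (F : nat -> R) a k :
  F 0 = idx -> a < k ->
  (forall l, 0 < l < k -> P l = (l == a) || Q l) -> (0 < a -> Q a = false) ->
  \big[op/idx]_(1 <= l < k | P l) F l = op (F a) (\big[op/idx]_(1 <= l < k | Q l) F l).
Proof.
move=> F0 ak PQ Qa; rewrite (big_mkcond P) (big_mkcond Q).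
have [a0|a0] := posnP a.
  subst a; rewrite F0 Monoid.mul1m; apply: eq_big_nat => l /andP[l0 lk].
  by rewrite PQ ?l0 ?lk // (gtn_eqF l0).
have a_in : a \in index_iota 1 k by rewrite mem_index_iota a0.
rewrite (bigD1_seq a) ?iota_uniq // [in RHS](bigD1_seq a) ?iota_uniq //=.
rewrite PQ ?a0 // eqxx Qa // Monoid.mul1m; congr (op _ _).
rewrite big_seq_cond [RHS]big_seq_cond; apply: eq_bigr => l.
by rewrite mem_index_iota => /andP[lk la]; rewrite PQ // (negbTE la).
Qed.
End BigNat.

Local Open Scope ring_scope.

Section Reflections.
Variables (n : nat) (C : 'M[int]_n).

Definition coroot_pair (r : 'I_n) (v : 'rV[int]_n) : int := \sum_m C r m * v 0 m.

Lemma srefE r v : sref C r v = v - coroot_pair r v *: sroot r.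
Proof. by []. Qed.

Lemma coroot_pair_sub_scale r u c w :
  coroot_pair r (u - c *: w) = coroot_pair r u - c * coroot_pair r w.
Proof.
rewrite /coroot_pair mulr_sumr -sumrB; apply: eq_bigr => m _.
by rewrite !mxE; ring.
Qed.

Lemma coroot_pair_sroot r j : coroot_pair r (sroot j) = C r j.
Proof.
rewrite /coroot_pair (bigD1 j) //= big1 ?addr0 => [|m mj].
  by rewrite /sroot mxE !eqxx mulr1.
by rewrite /sroot mxE (negbTE mj) andbF mulr0.
Qed.

Lemma wact0 w : wact C w 0 = 0.
Proof.
elim: w => //= r w ->; rewrite srefE.
by rewrite /coroot_pair big1 ?scale0r ?subr0 // => m _; rewrite mxE mulr0.
Qed.

Hypothesis Cd : forall r, C r r = 2.

Lemma sref_involutive r : involutive (sref C r).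
Proof.
move=> v; rewrite [X in sref _ _ X]srefE srefE coroot_pair_sub_scale.
by rewrite coroot_pair_sroot Cd; apply/matrixP => x y; rewrite !mxE; ring.
Qed.

Lemma wact_inj w : injective (wact C w).
Proof.
elim: w => //= r w IH v1 v2 /(can_inj (sref_involutive r)); exact: IH.
Qed.

Lemma wact_sroot_neq0 w r : wact C w (sroot r) != 0.
Proof.
rewrite -(wact0 w) (inj_eq (@wact_inj w)).
by apply/eqP => /matrixP/(_ 0 r); rewrite !mxE !eqxx.
Qed.

Lemma pos_root_neq0 b : pos_root C b -> b != 0.
Proof. by case=> [[w [r ->]] _]; apply: wact_sroot_neq0. Qed.

Variables (p q : 'I_n).
Hypotheses (Cpq : C p q = -1) (Cqp : C q p = -1).

Lemma sref_braid v :
  sref C p (sref C q (sref C p v)) = sref C q (sref C p (sref C q v)).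
Proof.
rewrite !srefE !coroot_pair_sub_scale !coroot_pair_sroot !Cd Cpq Cqp.
by apply/matrixP => x y; rewrite !mxE; ring.
Qed.

Lemma sref_sroot_comm : sref C q (sroot p) = sref C p (sroot q).
Proof.
rewrite !srefE !coroot_pair_sroot Cpq Cqp.
by apply/matrixP => x y; rewrite !mxE; ring.
Qed.

Lemma sref_pq_sroot : sref C p (sref C q (sroot p)) = sroot q.
Proof.
rewrite !srefE !coroot_pair_sub_scale !coroot_pair_sroot !Cd Cpq Cqp.
by apply/matrixP => x y; rewrite !mxE; ring.
Qed.

Lemma sref_qp_sroot : sref C q (sref C p (sroot q)) = sroot p.
Proof.
rewrite !srefE !coroot_pair_sub_scale !coroot_pair_sroot !Cd Cpq Cqp.
by apply/matrixP => x y; rewrite !mxE; ring.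
Qed.

End Reflections.

Lemma lin_neq0 n (v : 'rV[int]_n) : v != 0 -> lin v != 0.
Proof.
move=> v0; rewrite /lin tofrac_eq0; apply: contra v0 => /eqP E.
apply/eqP/matrixP => x m; rewrite ord1 mxE.
have := congr1 (mcoeff U_(m)) E; rewrite mcoeff0 raddf_sum /= (bigD1 m) //= big1 ?addr0.
  by rewrite mcoeffZ mcoeffXU eqxx mulr1 => /eqP; rewrite intr_eq0 => /eqP.
by move=> m' /negbTE mm; rewrite mcoeffZ mcoeffXU mm mulr0.
Qed.

Lemma PP_neq0 n (C : 'M[int]_n) (Cd : forall r, C r r = 2)
    (P : nat -> seq 'rV[int]_n) j :
  (forall b, b \in P j -> pos_root C b) -> PP P j != 0.
Proof.
move=> hA; rewrite /PP; case: ifP => _; first exact: oner_neq0.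
rewrite /prodR prodf_seq_neq0; apply/allP => b /hA /(pos_root_neq0 Cd) b0.
exact: lin_neq0.
Qed.

Lemma wact_wordS n (C : 'M[int]_n) f m v :
  wact C (word f m.+1) v = wact C (word f m) (sref C (f m.+1) v).
Proof. by rewrite /word -[m.+1]addn1 iotaD map_cat /wact foldr_cat add1n addn1. Qed.

Lemma eq_word n (f g : nat -> 'I_n) m :
  (forall l, (0 < l <= m)%N -> f l = g l) -> word f m = word g m.
Proof.
by move=> fg; apply/eq_in_map => l; rewrite mem_iota => /andP[l0 lm]; apply: fg; lia.
Qed.

Section ExchangeIdentities.
Variables (K : fieldType) (bk bk1 bk2 Fk Fk1 Fk2 Fa Fb Rp Rq : K).
Hypotheses (Fk_neq0 : Fk != 0) (Fa_neq0 : Fa != 0) (bk1_neq0 : bk1 != 0).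
Hypotheses (rel_k : Fk * Fb = bk * (Fa * Rp)) (rel_k1 : Fk1 * Fa = bk1 * (Rq * Fk))
  (rel_k2 : Fk2 * Fk = bk2 * (Rp * Fk1)).

Let Fk' := bk * (Fk2 * Fa) / (bk1 * Fk).

Let Fb_eq : Fb = bk * (Fa * Rp) / Fk.
Proof. by apply: (mulfI Fk_neq0); rewrite rel_k; field. Qed.

Let Fk1_eq : Fk1 = bk1 * (Rq * Fk) / Fa.
Proof. by apply: (mulIf Fa_neq0); rewrite rel_k1; field. Qed.

Let Fk2_eq : Fk2 = bk2 * (Rp * Fk1) / Fk.
Proof. by apply: (mulIf Fk_neq0); rewrite rel_k2; field. Qed.

Lemma exchange_identity_k : Fk' * Fa = bk2 * (Fb * Rq).
Proof. by rewrite /Fk' Fk2_eq Fk1_eq Fb_eq; field; rewrite Fk_neq0 Fa_neq0 bk1_neq0. Qed.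

Lemma exchange_identity_k1 : Fk2 * Fb = bk1 * (Rp * Fk').
Proof. by rewrite /Fk' Fb_eq; field; rewrite Fk_neq0 bk1_neq0. Qed.

Lemma exchange_identity_k2 : Fk1 * Fk' = bk * (Rq * Fk2).
Proof. by rewrite /Fk' Fk1_eq; field; rewrite Fk_neq0 Fa_neq0 bk1_neq0. Qed.

End ExchangeIdentities.

Section BraidMove.
Variables (n : nat) (C : 'M[int]_n) (N : nat) (i : nat -> 'I_n) (k : nat) (p q : 'I_n).
Hypotheses (Cd : forall r, C r r = 2) (Cpq : C p q = -1) (Cqp : C q p = -1).
Hypotheses (k0 : (0 < k)%N) (kN : (k.+2 <= N)%N).
Hypotheses (ip1 : i k = p) (iq : i k.+1 = q) (ip2 : i k.+2 = p).

Local Notation i' := (braid i k p q).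

Let qp : q != p.
Proof. by apply/eqP => qp; move: Cpq; rewrite qp Cd. Qed.

Let pq : p != q.
Proof. by rewrite eq_sym qp. Qed.

Lemma braid_k : i' k = q.
Proof. by rewrite /braid eqxx. Qed.

Lemma braid_k1 : i' k.+1 = p.
Proof. by rewrite /braid ifN ?eqxx //; lia. Qed.

Lemma braid_k2 : i' k.+2 = q.
Proof. by rewrite /braid eqxx orbT. Qed.

Lemma braid_out l : l != k -> l != k.+1 -> l != k.+2 -> i' l = i l.
Proof. by rewrite /braid => /negbTE-> /negbTE-> /negbTE->. Qed.

Lemma braid_sk l : l != k -> i' (sk k l) = i l.
Proof.
move=> lk; have [->|l1] := eqVneq l k.+1; first by rewrite sk1 braid_k2.
have [->|l2] := eqVneq l k.+2; first by rewrite sk2 braid_k1.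
by rewrite sk_id // braid_out.
Qed.

Lemma sk_pred_id x : (k.+1 < x)%N -> sk k.-1 x = x.
Proof. by move=> kx; rewrite sk_id // prednK //; lia. Qed.

Lemma next_occ_braid_ge c x : (k.+2 <= x)%N ->
  next_occ (fun y => i' y == c) N x = next_occ (fun y => i y == c) N x.
Proof. by move=> kx; apply: eq_next_occ => y xy; rewrite braid_out //; lia. Qed.

Lemma next_occ_braid_lt c l : (l < k)%N ->
  next_occ (fun y => i' y == c) N l = sk k.-1 (next_occ (fun y => i y == c) N l).
Proof.
move=> lk; move: {2}(k.-1 - l)%N (erefl (k.-1 - l)%N) => d.
elim: d l lk => [|d IH] l lk ed.
  have ek : l.+1 = k by lia.
  rewrite !(@next_occS _ N l) ?ek ?(@next_occS _ N k) ?(@next_occS _ N k.+1); try lia.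
  rewrite /= braid_k braid_k1 braid_k2 ip1 iq ip2 next_occ_braid_ge //.
  have gt := next_occ_gt (fun y => i y == c) kN.
  case: (eqVneq p c) => [<-|pc].
    by rewrite (negbTE qp) /sk prednK ?eqxx.
  case: (eqVneq q c) => [_|qc].
    by rewrite /sk prednK // ifN ?eqxx //; lia.
  by rewrite sk_pred_id // ltnW.
rewrite !(@next_occS _ N l) /=; try lia.
rewrite braid_out; try lia.
case: (i l.+1 == c); last by apply: IH; lia.
by rewrite sk_id // prednK //; lia.
Qed.

(* [sk k.-1] exchanges k and k.+1. *)
Lemma jplus_braid l : l != k -> (l <= N)%N ->
  jplus i' N (sk k l) = sk k.-1 (jplus i N l).
Proof.
move=> lk lN; have [lk'|kl] := ltnP l k.
  by rewrite sk_id ?jplusE ?braid_out ?next_occ_braid_lt //; lia.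
have far c : sk k.-1 (next_occ (fun y => i y == c) N k.+2) =
             next_occ (fun y => i y == c) N k.+2.
  by rewrite sk_pred_id // ltnW // next_occ_gt.
have [->|l1] := eqVneq l k.+1.
  rewrite sk1 !jplusE braid_k2 iq next_occ_braid_ge // [in RHS](@next_occS _ N) //=.
  by rewrite ip2 (negbTE pq) far.
have [->|l2] := eqVneq l k.+2.
  rewrite sk2 !jplusE braid_k1 ip2 (@next_occS _ N) //= braid_k2 (negbTE qp).
  by rewrite next_occ_braid_ge // far.
rewrite sk_id // !jplusE braid_out // next_occ_braid_ge; last by lia.
by rewrite sk_pred_id // (leq_trans _ (next_occ_gt _ lN)) //; lia.
Qed.

Lemma ltn_jplus_braid t l : t != k -> l != k -> (l <= N)%N ->
  (t < jplus i' N (sk k l))%N = (t < jplus i N l)%N.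
Proof. by move=> tk lk lN; rewrite jplus_braid // ltn_sk // prednK. Qed.

Let i_k2 : i k.+2 = i k.
Proof. by rewrite ip1 ip2. Qed.

Let i_k1 : i k.+1 != i k.
Proof. by rewrite ip1 iq. Qed.

Let i'_k2 : i' k.+2 = i' k.
Proof. by rewrite braid_k braid_k2. Qed.

Let i'_k1 : i' k.+1 != i' k.
Proof. by rewrite braid_k braid_k1. Qed.

Lemma jplus_k : jplus i N k = k.+2.
Proof. exact: jplus_triple_k. Qed.

Lemma jplus'_k : jplus i' N k = k.+2.
Proof. exact: jplus_triple_k. Qed.

Lemma jminus_k2 : jminus i k.+2 = k.
Proof. exact: jminus_triple_k2. Qed.

Lemma jminus'_k2 : jminus i' k.+2 = k.
Proof. exact: jminus_triple_k2. Qed.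

Lemma jminus'_k : jminus i' k = jminus i k.+1.
Proof.
rewrite !jminusE prev_occS //= ip1 braid_k iq (negbTE pq).
by apply: eq_prev_occ => x xk; rewrite braid_out //; lia.
Qed.

Lemma jminus'_k1 : jminus i' k.+1 = jminus i k.
Proof.
rewrite !jminusE prev_occS //= braid_k braid_k1 ip1 (negbTE qp).
by apply: eq_prev_occ => x xk; rewrite braid_out //; lia.
Qed.

Lemma prev_occ_braid_gt c m : (k.+2 < m)%N ->
  prev_occ (fun y => i' y == c) m = sk k (prev_occ (fun y => i y == c) m).
Proof.
elim: m => // m IH; rewrite ltnS leq_eqVlt => /orP[/eqP<-|km].
  rewrite !prev_occS //= braid_k braid_k1 braid_k2 ip1 iq ip2.
  have -> : prev_occ (fun y => i' y == c) k = prev_occ (fun y => i y == c) k.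
    by apply: eq_prev_occ => x xk; rewrite braid_out //; lia.
  have lt := prev_occ_lt (fun y => i y == c) k0.
  case: (eqVneq p c) => [<-|pc]; first by rewrite (negbTE qp) sk2.
  case: (eqVneq q c) => [_|qc]; first by rewrite sk1.
  by rewrite sk_id //; lia.
rewrite !prev_occS /=; try lia.
rewrite braid_out; try lia.
case: (i m == c); last exact: IH.
by rewrite sk_id //; lia.
Qed.

Lemma jminus_braid_far j : j != k -> j != k.+1 -> j != k.+2 ->
  jminus i' j = sk k (jminus i j).
Proof.
move=> j0 j1 j2; rewrite !jminusE braid_out //.
have [jk|kj] := ltnP j k; last by apply: prev_occ_braid_gt; lia.
have [->|jpos] := posnP j; first by rewrite /prev_occ !big_geq.
rewrite sk_id; try by have := prev_occ_lt (fun l => i l == i j) jpos; lia.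
by apply: eq_prev_occ => x xj; rewrite braid_out //; lia.
Qed.

Lemma word_braid_lt m : (m < k)%N -> word i' m = word i m.
Proof. by move=> mk; apply: eq_word => l lm; rewrite braid_out //; lia. Qed.

Lemma wact_word_k f v : wact C (word f k) v = wact C (word f k.-1) (sref C (f k) v).
Proof. by rewrite -{1}(prednK k0) wact_wordS prednK. Qed.

Lemma wact_braid_ge m v : (k.+2 <= m)%N -> wact C (word i' m) v = wact C (word i m) v.
Proof.
elim: m v => // m IH v; rewrite leq_eqVlt => /orP[/eqP[<-]|km].
  rewrite !wact_wordS !wact_word_k word_braid_lt ?prednK //.
  by rewrite braid_k braid_k1 braid_k2 ip1 iq ip2 sref_braid.
by rewrite !wact_wordS braid_out ?IH //; lia.
Qed.

Lemma beta_braid_far j : j != k -> j != k.+1 -> j != k.+2 -> beta C i' j = beta C i j.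
Proof.
move=> j0 j1 j2; rewrite /beta braid_out //.
have [jk|kj] := ltnP j k; first by rewrite word_braid_lt //; lia.
by rewrite wact_braid_ge //; lia.
Qed.

Lemma beta'_k : beta C i' k = beta C i k.+2.
Proof.
rewrite /beta [k.+2.-1]/= wact_wordS wact_word_k word_braid_lt ?prednK //.
by rewrite braid_k ip1 iq ip2 sref_pq_sroot.
Qed.

Lemma beta'_k1 : beta C i' k.+1 = beta C i k.+1.
Proof.
rewrite /beta [k.+1.-1]/= !wact_word_k word_braid_lt ?prednK //.
by rewrite braid_k braid_k1 ip1 iq sref_sroot_comm.
Qed.

Lemma beta'_k2 : beta C i' k.+2 = beta C i k.
Proof.
rewrite /beta [k.+2.-1]/= wact_wordS wact_word_k word_braid_lt ?prednK //.
by rewrite braid_k braid_k1 braid_k2 ip1 sref_qp_sroot.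
Qed.

Variable P : nat -> seq 'rV[int]_n.
Hypothesis PP_nz : forall j, (j <= N)%N -> PP P j != 0.
Hypothesis relationB : forall j, (1 <= j <= N)%N ->
  PP P j * PP P (jminus i j) =
  lin (beta C i j) *
  \prod_(1 <= l < j | (j < jplus i N l)%N && (C (i l) (i j) == -1)) PP P l.

Local Notation F := (PP P).
Local Notation Pn := (Pnew C i N P k).
Local Notation a := (jminus i k.+1).
Local Notation b := (jminus i k).
Local Notation R c :=
  (\prod_(1 <= l < k | (k.+2 < jplus i N l)%N && (C (i l) c == -1)) PP P l).

Lemma ltn_jplus_k l : (0 < l < k)%N ->
  (k < jplus i N l)%N = (l == a) || (k.+2 < jplus i N l)%N.
Proof. exact: ltn_jplus_triple. Qed.

Lemma ltn_jplus'_k l : (0 < l < k)%N ->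
  (k < jplus i' N l)%N = (l == b) || (k.+2 < jplus i N l)%N.
Proof.
move=> lk; rewrite (ltn_jplus_triple k0 kN i'_k2 i'_k1 lk) jminus'_k1.
have -> : jplus i' N l = jplus i' N (sk k l) by rewrite sk_id //; lia.
by rewrite ltn_jplus_braid //; lia.
Qed.

Lemma a_lt_k : (a < k)%N.
Proof. exact: jminus_triple_k1_lt. Qed.

Lemma b_lt_k : (b < k)%N.
Proof. exact: jminus_lt. Qed.

Lemma jplus_a : (0 < a)%N -> jplus i N a = k.+1.
Proof.
move=> a0; apply/eqP; rewrite -(@jminus_eq_jplus _ i N) ?a0 ?eqxx //;
  by have := a_lt_k; lia.
Qed.

Lemma jplus_b : (0 < b)%N -> jplus i N b = k.
Proof.
move=> b0; apply/eqP; rewrite -(@jminus_eq_jplus _ i N) ?b0 ?eqxx //;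
  by have := b_lt_k; lia.
Qed.

Lemma prod_below_gt t c : (k < t <= k.+2)%N ->
  \prod_(1 <= l < k | (t < jplus i N l)%N && (C (i l) c == -1)) F l = R c.
Proof.
move=> kt; rewrite big_nat_cond [RHS]big_nat_cond; apply: eq_bigl => l.
case/boolP: (1 <= l < k)%N => //= lk.
have : jplus i N l != k.+2 by exact: jplus_triple_neq_k2.
by case: (C (i l) c == -1); rewrite ?andbF ?andbT //; lia.
Qed.

Lemma prod'_below_gt t c : (k < t <= k.+2)%N ->
  \prod_(1 <= l < k | (t < jplus i' N l)%N && (C (i l) c == -1)) F l = R c.
Proof.
move=> kt; rewrite -(prod_below_gt c kt) big_nat_cond [RHS]big_nat_cond.
apply: eq_bigl => l; case/boolP: (1 <= l < k)%N => //= lk.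
have -> : jplus i' N l = jplus i' N (sk k l) by rewrite sk_id //; lia.
by rewrite ltn_jplus_braid //; lia.
Qed.

Lemma prod_below_k_p :
  \prod_(1 <= l < k | (k < jplus i N l)%N && (C (i l) p == -1)) F l = F a * R p.
Proof.
apply: big_nat_extract; [by rewrite /PP | exact: a_lt_k | move=> l lk | move=> a0].
  rewrite (ltn_jplus_k lk); move: lk; have [->|_] := eqVneq l a => /andP[a0 _] //.
  by rewrite /= (jminus_colour a0) iq Cqp eqxx.
by rewrite jplus_a //; lia.
Qed.

Lemma prod'_below_k_q :
  \prod_(1 <= l < k | (k < jplus i' N l)%N && (C (i l) q == -1)) F l = F b * R q.
Proof.
apply: big_nat_extract; [by rewrite /PP | exact: b_lt_k | move=> l lk | move=> b0].
  rewrite (ltn_jplus'_k lk); move: lk; have [->|_] := eqVneq l b => /andP[b0 _] //.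
  by rewrite /= (jminus_colour b0) ip1 Cpq eqxx.
by rewrite jplus_b //; lia.
Qed.

Lemma Pin_k : Pin C i N P k = F k.+2 * F a.
Proof.
rewrite /Pin jplus_k ip1; congr (_ * _).
rewrite (big_nat_extract _ (Q := pred0) _ a_lt_k) ?big_pred0 ?Monoid.mulm1 //.
move=> l lk; rewrite (ltn_jplus_k lk) /=.
move: lk; have [->|_] /= := eqVneq l a => /andP[a0 _]; last by lia.
by rewrite (jminus_colour a0) iq Cqp eqxx jplus_a // ltnSn.
Qed.

Lemma Pnew_sk j : j != k -> Pn j = F (sk k j).
Proof. by move=> jk; rewrite /Pnew (negbTE jk); case: eqP => [->|]. Qed.

Lemma Pnew_k : Pn k = lin (beta C i k) * (F k.+2 * F a) / (lin (beta C i k.+1) * F k).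
Proof. by rewrite /Pnew gtn_eqF // eqxx Pin_k. Qed.

Let Fk_neq0 : F k != 0.
Proof. by apply: PP_nz; lia. Qed.

Let Fa_neq0 : F a != 0.
Proof. by apply: PP_nz; have := a_lt_k; lia. Qed.

Let beta_k1_neq0 : lin (beta C i k.+1) != 0.
Proof. exact/lin_neq0/wact_sroot_neq0. Qed.

Lemma relationB_k : F k * F b = lin (beta C i k) * (F a * R p).
Proof. by rewrite relationB ?ip1 ?prod_below_k_p //; lia. Qed.

Lemma relationB_k1 : F k.+1 * F a = lin (beta C i k.+1) * (R q * F k).
Proof.
rewrite relationB; last by lia.
rewrite iq big_mkcond big_nat_recr //= -big_mkcond.
by rewrite jplus_k ip1 Cpq ltnSn eqxx prod_below_gt //; lia.
Qed.

Lemma jplus_k1_gt : (k.+2 < jplus i N k.+1)%N.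
Proof. by rewrite jplusE (@next_occS _ N) //= ip2 iq (negbTE pq) next_occ_gt. Qed.

Lemma relationB_k2 : F k.+2 * F k = lin (beta C i k.+2) * (R p * F k.+1).
Proof.
rewrite -{2}jminus_k2 relationB; last by lia.
rewrite ip2 big_mkcond !big_nat_recr //= -big_mkcond.
rewrite jplus_k ltnn iq Cqp eqxx mulr1.
by rewrite jplus_k1_gt prod_below_gt //; lia.
Qed.

Lemma prod_below_braid (Q : nat -> 'I_n -> bool) :
  \prod_(1 <= l < k | Q l (i' l)) Pn l = \prod_(1 <= l < k | Q l (i l)) F l.
Proof.
rewrite big_mkcond [RHS]big_mkcond; apply: eq_big_nat => l lk.
by rewrite braid_out ?Pnew_sk ?sk_id //; lia.
Qed.

Lemma relationB'_k :
  Pn k * Pn (jminus i' k) = lin (beta C i' k) *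
  \prod_(1 <= l < k | (k < jplus i' N l)%N && (C (i' l) (i' k) == -1)) Pn l.
Proof.
have ak : a != k by have := a_lt_k; lia.
rewrite jminus'_k (Pnew_sk ak) sk_id; try by have := a_lt_k; lia.
rewrite braid_k beta'_k (prod_below_braid (fun l c => (k < jplus i' N l)%N && (C c q == -1))).
rewrite prod'_below_k_q Pnew_k.
exact: exchange_identity_k Fk_neq0 Fa_neq0 beta_k1_neq0 relationB_k relationB_k1 relationB_k2.
Qed.

Lemma relationB'_k1 :
  Pn k.+1 * Pn (jminus i' k.+1) = lin (beta C i' k.+1) *
  \prod_(1 <= l < k.+1 | (k.+1 < jplus i' N l)%N && (C (i' l) (i' k.+1) == -1)) Pn l.
Proof.
have k1k : k.+1 != k by lia.
have bk : b != k by have := b_lt_k; lia.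
rewrite jminus'_k1 (Pnew_sk k1k) (Pnew_sk bk) sk1 sk_id; try by have := b_lt_k; lia.
rewrite braid_k1 beta'_k1 big_mkcond big_nat_recr //= -big_mkcond.
rewrite jplus'_k braid_k Cqp ltnSn eqxx /=.
rewrite (prod_below_braid (fun l c => (k.+1 < jplus i' N l)%N && (C c p == -1))).
rewrite prod'_below_gt ?Pnew_k; last by lia.
exact: exchange_identity_k1 Fk_neq0 beta_k1_neq0 relationB_k.
Qed.

Lemma relationB'_k2 :
  Pn k.+2 * Pn (jminus i' k.+2) = lin (beta C i' k.+2) *
  \prod_(1 <= l < k.+2 | (k.+2 < jplus i' N l)%N && (C (i' l) (i' k.+2) == -1)) Pn l.
Proof.
have k1k : k.+1 != k by lia.
have k2k : k.+2 != k by lia.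
rewrite jminus'_k2 (Pnew_sk k2k) sk2.
rewrite braid_k2 beta'_k2 big_mkcond !big_nat_recr //= -big_mkcond.
rewrite jplus'_k ltnn braid_k1 Cpq eqxx mulr1 (Pnew_sk k1k) sk1.
have -> : (k.+2 < jplus i' N k.+1)%N.
  by rewrite -[X in jplus _ _ X](sk2 k) ltn_jplus_braid ?next_occ_gt //; lia.
rewrite (prod_below_braid (fun l c => (k.+2 < jplus i' N l)%N && (C c q == -1))).
rewrite prod'_below_gt ?Pnew_k; last by lia.
exact: exchange_identity_k2 Fk_neq0 Fa_neq0 beta_k1_neq0 relationB_k1.
Qed.

Lemma relationB'_far j : (0 < j <= N)%N -> j != k -> j != k.+1 -> j != k.+2 ->
  Pn j * Pn (jminus i' j) = lin (beta C i' j) *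
  \prod_(1 <= l < j | (j < jplus i' N l)%N && (C (i' l) (i' j) == -1)) Pn l.
Proof.
move=> jN j0 j1 j2; have mk := jminus_triple_neq_k k0 kN i_k2 i_k1 jN j2.
have smk : sk k (jminus i j) != k.
  by rewrite -(inj_eq (can_inj (sk_inv k))) sk_inv sk_id //; lia.
rewrite jminus_braid_far // (Pnew_sk j0) (Pnew_sk smk) sk_inv sk_id //.
rewrite braid_out // beta_braid_far // relationB //; congr (_ * _).
rewrite [RHS](big_nat_sk _ (m := k)) //.
rewrite big_mkcond [RHS]big_mkcond; apply: eq_big_nat => l lj.
move: lj; have [->|lk] := eqVneq l k => lj.
  have -> : sk k k = k by rewrite sk_id //; lia.
  rewrite jplus'_k jplus_k.
  by have -> : (j < k.+2)%N = false by lia.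
rewrite braid_sk // (Pnew_sk (_ : sk k l != k)) ?sk_inv ?ltn_jplus_braid //; try lia.
by rewrite -(inj_eq (can_inj (sk_inv k))) sk_inv sk_id //; lia.
Qed.

Lemma relationB_braid j : (0 < j <= N)%N ->
  Pn j * Pn (jminus i' j) = lin (beta C i' j) *
  \prod_(1 <= l < j | (j < jplus i' N l)%N && (C (i' l) (i' j) == -1)) Pn l.
Proof.
move=> jN; have [->|j0] := eqVneq j k; first exact: relationB'_k.
have [->|j1] := eqVneq j k.+1; first exact: relationB'_k1.
have [->|j2] := eqVneq j k.+2; first exact: relationB'_k2.
exact: relationB'_far.
Qed.

End BraidMove.

Theorem proposition6p8 (n : nat) (C : 'M[int]_n)
  (hC : simply_laced_simple_cartan C)
  (N : nat) (i : nat -> 'I_n) (hi : red_w0 C (word i N))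
  (k : nat) (p q : 'I_n)
  (hk1 : (1 <= k)%N) (hkN : (k.+2 <= N)%N)
  (hp1 : i k = p) (hq : i k.+1 = q) (hp2 : i k.+2 = p)
  (hpq : C p q = -1)
  (P : nat -> seq 'rV[int]_n)
  (* (A): each P_j is a product of positive roots *)
  (hA : forall j, (1 <= j <= N)%N -> forall b, b \in P j -> pos_root C b)
  (* (B) *)
  (hB : forall j, (1 <= j <= N)%N ->
     PP P j * PP P (jminus i j) =
     lin (beta C i j) *
     \prod_(1 <= l < j | (j < jplus i N l)%N && (C (i l) (i j) == -1)) PP P l)
  (* (C) *)
  (hCC : forall j, (1 <= j <= N)%N -> (jplus i N j <= N)%N ->
     forall m, (1 <= m <= N)%N ->
     (count_mem (beta C i m) (P j) <= (count_mem (beta C i m) (P (jplus i N j))).+1)%N) :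
  let i' := braid i k p q in
  forall j, (1 <= j <= N)%N ->
    Pnew C i N P k j * Pnew C i N P k (jminus i' j) =
    lin (beta C i' j) *
    \prod_(1 <= l < j | (j < jplus i' N l)%N && (C (i' l) (i' j) == -1))
       Pnew C i N P k l.
Proof.
move=> i' j hj; case: hC => Cd _ Csym _ _.
have hqp : C q p = -1 by rewrite Csym.
have PP_nz m : (m <= N)%N -> PP P m != 0.
  case: m => [|m] mN; first by rewrite /PP oner_neq0.
  by apply: (PP_neq0 Cd) => b; apply: hA; rewrite mN.
exact (relationB_braid Cd hpq hqp hk1 hkN hp1 hq hp2 PP_nz hB hj).
Qed.
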